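(* Let $p$ be a prime and $G$ a finite metacyclic $p$-group. Then every non-abelian subgroup $H$ of $G$ satisfies $C_G(H)\le H$.
   Context: A group is metacyclic if it has a cyclic normal subgroup with cyclic quotient. $C_G(H)$ denotes the centralizer of $H$ in $G$. *)

From mathcomp Require Import all_boot all_fingroup all_solvable.

From mathcomp Require Import all_boot all_fingroup all_solvable.
Set Implicit Arguments. Unset Strict Implicit. Unset Printing Implicit Defensive.
Local Open Scope group_scope.

(* Write G as an extension of a cyclic normal N by the cyclic G/N, and let
   H/N be generated by the coset of h in H. H is generated by H :&: N and h,
   so, H being non-abelian, h does not centralise A = H :&: N. Subgroups of
   a cyclic p-group form a chain. Given c in 'C_G(H), compare <cN> and <hN>
   in G/N: if h = n c^k with n in N, then h centralises A, which is absurd;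
   so c = n h^k with n in N :&: 'C[h], and comparing this subgroup with A
   inside N forces n in A, whence c in H. *)

Lemma cyclic_pgroup_sub_total (gT : finGroupType) (p : nat) (X B C : {group gT}) :
  p.-group X -> cyclic X -> B \subset X -> C \subset X ->
  B \subset C \/ C \subset B.
Proof.
move=> pX cX sBX sCX.
rewrite -(cardSg_cyclic cX sBX sCX) -(cardSg_cyclic cX sCX sBX).
rewrite (card_pgroup (pgroupS sBX pX)) (card_pgroup (pgroupS sCX pX)).
case: (leqP (logn p #|B|) (logn p #|C|)) => [le_BC | /ltnW le_CB].
- by left; apply: dvdn_exp2l.
- by right; apply: dvdn_exp2l.
Qed.

Lemma quotient_cycle_rcoset (gT : finGroupType) (N : {group gT}) (u v : gT) :
  u \in 'N(N) -> v \in 'N(N) -> coset N u \in <[coset N v]> ->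
  exists k, u * (v ^+ k)^-1 \in N.
Proof.
move=> Nu Nv /cycleP[k]; rewrite -morphX // => eq_uv.
exists k; rewrite -mem_rcoset.
by apply/rcoset_kercosetP; rewrite ?groupX.
Qed.

Section CyclicQuotient.

Variables (gT : finGroupType) (N H : {group gT}) (h : gT).
Hypotheses (nNH : H \subset 'N(N)) (Hh : h \in H)
           (defHq : H / N = <[coset N h]>).

Lemma sub_mulg_cycle_quotient : H \subset (H :&: N) * <[h]>.
Proof.
apply/subsetP => u Hu.
have Nh := subsetP nNH h Hh; have Nu := subsetP nNH u Hu.
have [k uhN] : exists k, u * (h ^+ k)^-1 \in N.
  by apply: quotient_cycle_rcoset; rewrite // -defHq mem_quotient.
rewrite -(mulgKV (h ^+ k) u) mem_mulg ?mem_cycle //.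
by rewrite inE uhN groupM ?groupV ?groupX.
Qed.

Lemma abelian_cent1_cyclic_quotient :
  abelian N -> H :&: N \subset 'C[h] -> abelian H.
Proof.
move=> abN sAC; apply: abelianS sub_mulg_cycle_quotient _.
have abA : abelian (H :&: N) := abelianS (subsetIr H N) abN.
have cAh : H :&: N \subset 'C(<[h]>) by rewrite cent_cycle.
by rewrite abelianM abA cycle_abelian centsC.
Qed.

Lemma cent_rcoset_sub_cent1 (c : gT) (k : nat) :
  abelian N -> c \in 'C(H) -> h * (c ^+ k)^-1 \in N -> H :&: N \subset 'C[h].
Proof.
move=> abN cHc hcN; rewrite sub_cent1 -(mulgKV (c ^+ k) h) groupM ?groupX //.
  exact: subsetP (subset_trans abN (centS (subsetIr H N))) _ hcN.
exact: subsetP (centS (subsetIl H N)) _ cHc.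
Qed.

Lemma cent_rcoset_mem (p : nat) (c : gT) (k : nat) :
  p.-group N -> cyclic N -> ~~ (H :&: N \subset 'C[h]) ->
  c \in 'C(H) -> c * (h ^+ k)^-1 \in N -> c \in H.
Proof.
move=> pN cycN nAh cHc chN.
have ch1 : c * (h ^+ k)^-1 \in N :&: 'C[h].
  rewrite inE chN groupM ?groupV ?groupX ?cent1id //.
  by apply/cent1P; apply: (centP cHc).
have [sAC | sCA] :=
  cyclic_pgroup_sub_total pN cycN (subsetIr H N) (subsetIl N 'C[h]).
  by case/negP: nAh; apply: subset_trans sAC (subsetIr _ _).
have /setIP[Hch _] := subsetP sCA _ ch1.
by rewrite -(mulgKV (h ^+ k) c) groupM ?groupX.
Qed.

End CyclicQuotient.

Theorem proposition6p7 (gT : finGroupType) (p : nat) (G H : {group gT}) :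
  prime p -> p.-group G -> metacyclic G ->
  H \subset G -> ~~ abelian H -> 'C_G(H) \subset H.
Proof.
move=> _ pG /metacyclicP[N [cycN nsNG cycGq]] sHG nabH.
have [sNG nNG] := andP nsNG; have nNH := subset_trans sHG nNG.
have abN := cyclic_abelian cycN.
have [xb defHq] := cyclicP (cyclicS (quotientS N sHG) cycGq).
have /morphimP[h Nh Hh defxb] : xb \in H / N by rewrite defHq cycle_id.
rewrite {xb}defxb in defHq.
have nAh : ~~ (H :&: N \subset 'C[h]).
  by apply: contra nabH; apply: abelian_cent1_cyclic_quotient.
apply/subsetP => c /setIP[Gc cHc].
have Nc := subsetP nNG c Gc; have Gh := subsetP sHG h Hh.
have quo_cycle x : x \in G -> <[coset N x]> \subset G / N.
  by move=> Gx; rewrite cycle_subG mem_quotient.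
have [sch | shc] := cyclic_pgroup_sub_total (quotient_pgroup N pG) cycGq
  (quo_cycle c Gc) (quo_cycle h Gh).
- have [k chN] := quotient_cycle_rcoset Nc Nh (subsetP sch _ (cycle_id _)).
  exact: cent_rcoset_mem (pgroupS sNG pG) cycN nAh cHc chN.
- have [k hcN] := quotient_cycle_rcoset Nh Nc (subsetP shc _ (cycle_id _)).
  by case/negP: nAh; apply: cent_rcoset_sub_cent1 abN cHc hcN.
Qed.
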